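(* Let $i\in\{1,\dots,N\}$, $k\ne y_i$, and $\delta>0$. If $u_i\le\log(1+e^{x_i^\top(w_k-w_{y_i})})-\delta$, then replacing $u_i$ by $\log(1+e^{x_i^\top(w_k-w_{y_i})})$ (keeping all other coordinates of $u$ and $W$ fixed) decreases $f(u,W)$ by at least $\delta^2/2$.
   Context: Data: $(y_i,x_i)$, $i=1,\dots,N$, $x_i\in\mathbb{R}^D$, $y_i\in\{1,\dots,K\}$, $K\ge 2$; $\mu\ge0$; $u\in\mathbb{R}^N$, $W=[w_1,\dots,w_K]\in\mathbb{R}^{D\times K}$ with Frobenius norm $\|W\|_2$; $$f(u,W)=\sum_{i=1}^N\Big[u_i+e^{-u_i}+\sum_{k\ne y_i}e^{x_i^\top(w_k-w_{y_i})-u_i}\Big]+\tfrac{\mu}{2}\|W\|_2^2.$$ *)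

From mathcomp Require Import all_boot all_order all_algebra.
From mathcomp Require Import all_classical all_reals all_analysis.
Set Implicit Arguments. Unset Strict Implicit. Unset Printing Implicit Defensive.
Import Order.TTheory GRing.Theory Num.Theory.
Local Open Scope ring_scope.

(* margin x_i^T (w_k - w_{y_i}); x i is a row vector in R^D, W is D x K,
   w_k is the k-th column of W *)
Definition margin (R : realType) (N D K : nat)
  (x : 'I_N -> 'rV[R]_D) (y : 'I_N -> 'I_K) (W : 'M[R]_(D, K))
  (i : 'I_N) (k : 'I_K) : R :=
  \sum_(d < D) x i 0 d * (W d k - W d (y i)).

Definition frob2 (R : realType) (D K : nat) (W : 'M[R]_(D, K)) : R :=
  \sum_(d < D) \sum_(k < K) W d k ^+ 2.

Definition fobj (R : realType) (N D K : nat)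
  (x : 'I_N -> 'rV[R]_D) (y : 'I_N -> 'I_K) (mu : R)
  (u : 'I_N -> R) (W : 'M[R]_(D, K)) : R :=
  \sum_(i < N) (u i + expR (- u i)
       + \sum_(k < K | k != y i) expR (margin x y W i k - u i))
  + mu / 2 * frob2 W.

From mathcomp Require Import all_boot all_order all_algebra.
From mathcomp Require Import all_classical all_reals all_analysis.
From mathcomp Require Import ring lra.
Set Implicit Arguments. Unset Strict Implicit. Unset Printing Implicit Defensive.
Import Order.TTheory GRing.Theory Num.Theory.
Local Open Scope ring_scope.

(* Only the i-th summand of f depends on u_i, and as a function of w = u_i it
   is w + A e^{-w} with A = 1 + sum_{k <> y_i} e^{m_k} >= 1 + e^{m_k} = e^L.
   Writing u_i = L - t with t >= delta, the decrease is
   -t + A e^{-L} (e^t - 1) >= e^t - 1 - t >= t^2/2 >= delta^2/2. *)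

Lemma sumr_update (V : zmodType) (I : finType) (T : eqType)
    (F : I -> T -> V) (u : I -> T) (i : I) (v : T) :
  \sum_j F j (u j) - \sum_j F j (if j == i then v else u j) = F i (u i) - F i v.
Proof.
rewrite (bigD1 i) // [X in _ - X](bigD1 i) //= eqxx.
rewrite [X in _ - (_ + X)](eq_bigr (fun j => F j (u j))) => [|j /negPf -> //].
by rewrite opprD addrACA subrr addr0.
Qed.

Section LinExp.
Variable R : realType.

Lemma expR_ge1Dx_sqr_half (t : R) : 0 <= t -> 1 + t + t ^+ 2 / 2 <= expR t.
Proof.
move=> t_ge0.
have -> : 1 + t + t ^+ 2 / 2 = series (exp_coeff t) 3.
  by rewrite /series /= !big_nat_recr //= big_nil /exp_coeff /= expr0 expr1 !divr1 add0r.
apply: (nondecreasing_cvgn_le _ (is_cvg_series_exp_coeff t)).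
by apply: nondecreasing_series => n _ _; exact: exp_coeff_ge0.
Qed.

Lemma sum_expRB (I : finType) (P : pred I) (a : I -> R) (w : R) :
  \sum_(j | P j) expR (a j - w) = (\sum_(j | P j) expR (a j)) * expR (- w).
Proof. by rewrite big_distrl; apply: eq_bigr => j _; rewrite expRD. Qed.

Lemma linDexpN_decrease (A L u : R) : u <= L -> expR L <= A ->
  (L - u) ^+ 2 / 2 <= (u + A * expR (- u)) - (L + A * expR (- L)).
Proof.
move=> uL LA; set t := L - u.
have t_ge0 : 0 <= t by rewrite subr_ge0.
have scale_ge1 : 1 <= A * expR (- L).
  by rewrite -(expRxMexpNx_1 L) ler_wpM2r ?expR_ge0.
have -> : A * expR (- u) = A * expR (- L) * expR t.
  by rewrite -mulrA -expRD /t; congr (_ * expR _); ring.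
have -> : u = L - t by rewrite /t; ring.
have := expR_ge1Dx_sqr_half t_ge0.
move: scale_ge1; set c := A * expR (- L); set E := expR t; nra.
Qed.

End LinExp.

Definition sample_loss (R : realType) (N D K : nat)
  (x : 'I_N -> 'rV[R]_D) (y : 'I_N -> 'I_K) (W : 'M[R]_(D, K))
  (i : 'I_N) (w : R) : R :=
  w + expR (- w) + \sum_(k < K | k != y i) expR (margin x y W i k - w).

Lemma fobj_update (R : realType) (N D K : nat)
    (x : 'I_N -> 'rV[R]_D) (y : 'I_N -> 'I_K) (mu : R)
    (u : 'I_N -> R) (W : 'M[R]_(D, K)) (i : 'I_N) (v : R) :
  fobj x y mu u W - fobj x y mu (fun j => if j == i then v else u j) W
  = sample_loss x y W i (u i) - sample_loss x y W i v.
Proof.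
rewrite /fobj opprD addrACA subrr addr0.
exact: (sumr_update (sample_loss x y W)).
Qed.

Lemma sample_lossE (R : realType) (N D K : nat)
    (x : 'I_N -> 'rV[R]_D) (y : 'I_N -> 'I_K) (W : 'M[R]_(D, K))
    (i : 'I_N) (w : R) :
  sample_loss x y W i w
  = w + (1 + \sum_(k < K | k != y i) expR (margin x y W i k)) * expR (- w).
Proof. by rewrite /sample_loss sum_expRB; ring. Qed.

Theorem lemma5 (R : realType) (N D K : nat)
  (x : 'I_N -> 'rV[R]_D) (y : 'I_N -> 'I_K) (mu : R)
  (u : 'I_N -> R) (W : 'M[R]_(D, K))
  (i : 'I_N) (k : 'I_K) (delta : R) :
  (2 <= K)%N -> 0 <= mu -> k != y i -> 0 < delta ->
  u i <= ln (1 + expR (margin x y W i k)) - delta ->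
  fobj x y mu u W
    - fobj x y mu
        (fun j => if j == i then ln (1 + expR (margin x y W i k)) else u j) W
    >= delta ^+ 2 / 2.
Proof.
move=> _ _ k_neq delta_gt0 u_le.
set L := ln _ in u_le *.
rewrite fobj_update !sample_lossE.
set A := 1 + _.
have LA : expR L <= A.
  rewrite lnK ?posrE ?addr_gt0 ?expR_gt0 // lerD2l (bigD1 k) //= lerDl.
  by apply: sumr_ge0 => j _; exact: expR_ge0.
have uL : u i <= L by lra.
have delta_le : delta <= L - u i by lra.
apply: le_trans (linDexpN_decrease uL LA).
by rewrite ler_pM2r ?invr_gt0 // ler_sqr ?nnegrE ?subr_ge0 ?(ltW delta_gt0).
Qed.
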